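(* Suppose that $p$ is an odd prime. Let $\mu$ denote the number of integers $j$ with $1\le j<\frac{p}{2}$ such that the inverse $j^{-1}$ of $j$ modulo $p$ (taken as the representative in $\{1,\dots,p-1\}$) is also less than $\frac{p}{2}$. (1) If $p\equiv 3\pmod 4$, then $(p-1)!!\equiv (-1)^{\frac{\mu+1}{2}} \pmod p$. (2) If $p\equiv 1\pmod 4$, then $(p-1)!!\equiv (-1)^{\frac{\mu+1}{2}}\, i_p \pmod p$, where $i_p$ is the unique natural number less than $\frac{p}{2}$ with $i_p^2\equiv -1 \pmod p$.
   Context: For a natural number $n$, the double factorial $n!!$ is the product of the natural numbers less than or equal to $n$ that have the same parity as $n$. *)

From HB Require Import structures.
From mathcomp Require Import all_boot all_order all_algebra.
Set Implicit Arguments. Unset Strict Implicit. Unset Printing Implicit Defensive.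

Fixpoint dfact (n : nat) : nat :=
  match n with
  | 0 => 1
  | 1 => 1
  | (m.+2) as k => k * dfact m
  end.

Definition modinv (p j : nat) : nat :=
  odflt 0%N (omap (@nat_of_ord p) [pick k : 'I_p | (j * k) %% p == 1 %% p]).

Definition mu (p : nat) : nat :=
  #|[set j : 'I_p | (0 < j) && (2 * j < p) && (2 * modinv p j < p)]|.

From mathcomp Require Import all_boot all_algebra finfield zify.
Set Implicit Arguments. Unset Strict Implicit. Unset Printing Implicit Defensive.
Import GRing.Theory.
Local Open Scope ring_scope.

(* Write p = 2h + 1.  By Gauss's lemma, (p-1)!! = prod_{j <= h} 2j is
   (-1)^(h - h/2) h! mod p.  Split the lower half {1, ..., h} according to
   whether j^-1 also lies in it.  On the first part, which has mu elements,
   j |-> j^-1 is an involution whose only fixed point is 1, so mu is odd and the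
   product is 1.  On the second part, j |-> -j^-1 is an involution whose pairs
   multiply to -1 and whose fixed points are the square roots of -1 in the
   lower half: none when p = 3 (mod 4), and just i_p when p = 1 (mod 4).
   Counting the pairs turns the sign into (-1)^((mu+1)/2). *)

Lemma big_set_inj_endo (R : Type) (idx : R) (op : Monoid.com_law idx)
    (T : finType) (A : {set T}) (g : T -> T) (F : T -> R) :
  {in A, forall x, g x \in A} -> {in A &, injective g} ->
  \big[op/idx]_(x in A) F (g x) = \big[op/idx]_(x in A) F x.
Proof.
move=> gA g_inj; have gAE : g @: A = A.
  apply/eqP; rewrite eqEcard card_in_imset // leqnn andbT.
  by apply/subsetP => _ /imsetP[x xA ->]; apply: gA.
by rewrite -[in RHS]gAE big_imset.
Qed.

Section Involution.
Variables (T : finType) (R : comPzRingType) (s : T -> T) (F : T -> R) (c : R).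

Lemma prod_fixfree_involution (A : {set T}) :
  {in A, forall x, s x \in A} -> {in A, forall x, s (s x) = x} ->
  {in A, forall x, s x != x} -> {in A, forall x, F x * F (s x) = c} ->
  exists k, #|A| = k.*2 /\ \prod_(x in A) F x = c ^+ k.
Proof.
elim: {A}_.+1 {-2}A (ltnSn #|A|) => // n IH A leAn sA ssA sxA FsA.
have [-> | [x xA]] := set_0Vmem A; first by exists 0%N; rewrite cards0 big_set0.
set A' := A :\ x :\ s x.
have sxAx : s x \in A :\ x by rewrite !inE sxA ?sA.
have cardA : #|A| = #|A'|.+2.
  by rewrite (cardsD1 x A) (cardsD1 (s x) (A :\ x)) xA sxAx.
have A'P y : y \in A' -> [/\ y \in A, y != x & y != s x].
  by rewrite !inE => /and3P[-> -> ->].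
have [||||| k [cardA' prodA']] := IH A'.
- by rewrite cardA in leAn; apply: ltnW.
- move=> y /A'P[yA yx ysx]; rewrite !inE sA // andbT; apply/andP; split.
    by apply: contraNneq yx => /(congr1 s); rewrite !ssA // => ->.
  by apply: contraNneq ysx => <-; rewrite ssA.
- by move=> y /A'P[yA _ _]; apply: ssA.
- by move=> y /A'P[yA _ _]; apply: sxA.
- by move=> y /A'P[yA _ _]; apply: FsA.
exists k.+1; split; first by rewrite cardA cardA' doubleS.
by rewrite (big_setD1 x xA) (big_setD1 (s x) sxAx) /= -/A' prodA' mulrA FsA // exprS.
Qed.

Lemma prod_involution (A : {set T}) :
  {in A, forall x, s x \in A} -> {in A, forall x, s (s x) = x} ->
  {in A, forall x, s x != x -> F x * F (s x) = c} ->
  exists k, #|A| = (#|[set x in A | s x == x]| + k.*2)%N /\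
    \prod_(x in A) F x = \prod_(x in [set x in A | s x == x]) F x * c ^+ k.
Proof.
move=> sA ssA FsA; set D := [set x in A | s x != x].
have [|||| k [cardD prodD]] := @prod_fixfree_involution D.
- move=> x; rewrite !inE => /andP[xA sxx].
  by rewrite sA //= ssA // eq_sym.
- by move=> x; rewrite inE => /andP[xA _]; apply: ssA.
- by move=> x; rewrite inE => /andP[].
- by move=> x; rewrite inE => /andP[]; apply: FsA.
exists k; rewrite -cardD -prodD; split.
  by rewrite -!sum1_card (bigID (fun x => s x == x)) /=; congr (_ + _)%N;
    apply: eq_bigl => x; rewrite !inE.
by rewrite (bigID (fun x => s x == x)) /=; congr (_ * _);
  apply: eq_bigl => x; rewrite !inE.
Qed.

End Involution.

Lemma big_ord_lower_half (R : Type) (idx : R) (op : Monoid.com_law idx) h (G : nat -> R) :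
  \big[op/idx]_(j : 'I_(2 * h).+1 | (0 < j)%N && (2 * j < (2 * h).+1)%N) G j
    = \big[op/idx]_(1 <= j < h.+1) G j.
Proof.
rewrite -(big_mkord (fun j => (0 < j)%N && (2 * j < (2 * h).+1)%N) G).
rewrite big_ltn_cond //= [RHS](big_nat_widen _ _ (2 * h).+1); last by lia.
by rewrite big_nat_cond [RHS]big_nat_cond; apply: eq_bigl => j /=; lia.
Qed.

Lemma dfact_double h : dfact (2 * h) = (\prod_(1 <= j < h.+1) (2 * j))%N.
Proof.
elim: h => [|h IH]; first by rewrite big_geq.
have -> : (2 * h.+1 = (2 * h).+2)%N by rewrite mulnS.
by rewrite big_nat_recr //= -IH mulnC [in RHS]mulnS.
Qed.

Lemma sum_gt_half h : (\sum_(1 <= j < h.+1) (h < 2 * j))%N = (h - h./2)%N.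
Proof.
rewrite (big_cat_nat _ (n := h./2.+1)) //=; last by lia.
rewrite (@eq_big_nat _ _ _ 1 h./2.+1 _ (fun _ => 0%N)); last by move=> j; lia.
rewrite (@eq_big_nat _ _ _ h./2.+1 h.+1 _ (fun _ => 1%N)); last by move=> j; lia.
by rewrite !sum_nat_const_nat; lia.
Qed.

Lemma signr_mod2 (R : pzRingType) m n :
  (m %% 2 = n %% 2)%N -> (-1) ^+ m = (-1) ^+ n :> R.
Proof. by rewrite !modn2 => e; rewrite -signr_odd e signr_odd. Qed.

Definition lower_half p : {set 'I_p} := [set j : 'I_p | (0 < j)%N && (2 * j < p)%N].

Definition inv_lower p : {set 'I_p} :=
  [set j : 'I_p | (0 < j)%N && (2 * j < p)%N && (2 * modinv p j < p)%N].

Definition inv_upper p : {set 'I_p} :=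
  [set j : 'I_p | (0 < j)%N && (2 * j < p)%N && ~~ (2 * modinv p j < p)%N].

Definition sqrtm1_lower p : {set 'I_p} :=
  [set j in lower_half p | (j%:R ^+ 2 : 'F_p) == -1].

Section PrimeField.
Variable p : nat.
Hypothesis p_pr : prime p.

Lemma Fp_nat_eq m n : (m%:R : 'F_p) = n%:R <-> (m = n %[mod p])%N.
Proof.
split=> [e | e]; first by rewrite -!(val_Fp_nat p_pr) e.
by rewrite -(Fp_nat_mod p_pr) e Fp_nat_mod.
Qed.

Lemma Fp_nat_eq0 m : (m%:R : 'F_p) = 0 <-> (p %| m)%N.
Proof. by rewrite (dvdn_pcharf (pchar_Fp p_pr)); split=> /eqP. Qed.

Lemma Fp_nat_inj m n : (m < p)%N -> (n < p)%N -> (m%:R : 'F_p) = n%:R -> m = n.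
Proof. by move=> mp np /Fp_nat_eq; rewrite !modn_small. Qed.

Lemma Fp_nat_neq0 m : (0 < m < p)%N -> (m%:R : 'F_p) != 0.
Proof.
case/andP=> m_gt0 mp; apply/eqP => /Fp_nat_eq0 /(dvdn_leq m_gt0).
by rewrite leqNgt mp.
Qed.

Lemma Fp_natB m : (m <= p)%N -> ((p - m)%:R : 'F_p) = - m%:R.
Proof. by move=> mp; rewrite natrB // (pchar_Fp_0 p_pr) sub0r. Qed.

Lemma Fp_intr_eq_modz (a b : int) : (a%:~R : 'F_p) = b%:~R -> (a = b %[mod p])%Z.
Proof.
move=> e; apply/eqP; rewrite eqz_mod_dvd (dvdz_pcharf (pchar_Fp p_pr)) rmorphB /=.
by rewrite e subrr.
Qed.

(* The other square root of [x^2] is [-x], represented by [p - x], in the upper half. *)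
Lemma Fp_sqr_lower_half_inj x y : (0 < x)%N -> (2 * x < p)%N -> (2 * y < p)%N ->
  (x%:R ^+ 2 : 'F_p) = y%:R ^+ 2 -> x = y.
Proof.
move=> x_gt0 xp yp e.
have : ((x%:R : 'F_p) - y%:R) * (x + y)%:R = 0 by rewrite natrD -subr_sqr e subrr.
move/eqP; rewrite mulf_eq0 (negbTE (Fp_nat_neq0 _)) ?orbF; last by lia.
by rewrite subr_eq0 => /eqP; apply: Fp_nat_inj; lia.
Qed.

Lemma modinv_spec j : (0 < j < p)%N ->
  (modinv p j < p)%N /\ (j%:R * (modinv p j)%:R : 'F_p) = 1.
Proof.
move=> jp; rewrite /modinv; case: pickP => [k /eqP jk | no_inv] /=.
  by split; [exact: ltn_ord | rewrite -natrM -[1 : 'F_p]/(1%N%:R); apply/Fp_nat_eq].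
pose x := (j%:R : 'F_p)^-1.
have xp : (val x < p)%N by rewrite -[X in (_ < X)%N](Fp_cast p_pr) ltn_ord.
have := no_inv (Ordinal xp); rewrite /=.
have /Fp_nat_eq -> : (j * val x)%:R = (1%N%:R : 'F_p).
  by rewrite natrM natr_Zp mulfV // Fp_nat_neq0.
by rewrite eqxx.
Qed.

Lemma modinv_gt0 j : (0 < j < p)%N -> (0 < modinv p j < p)%N.
Proof.
move=> jp; have [-> e] := modinv_spec jp; rewrite andbT lt0n.
by apply: contra_eqN e => /eqP->; rewrite mulr0 eq_sym oner_eq0.
Qed.

Lemma modinv_eq j k : (0 < j < p)%N -> (k < p)%N ->
  modinv p j = k <-> (j%:R * k%:R : 'F_p) = 1.
Proof.
move=> jp kp; have [ip e] := modinv_spec jp; split=> [<- // | e'].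
by apply: Fp_nat_inj => //; apply: (mulfI (Fp_nat_neq0 jp)); rewrite e e'.
Qed.

Lemma modinvK j : (0 < j < p)%N -> modinv p (modinv p j) = j.
Proof.
move=> jp; apply/modinv_eq; rewrite ?modinv_gt0 //; first by case/andP: jp.
by rewrite mulrC; case: (modinv_spec jp).
Qed.

Lemma modinv_eq_opp j : (0 < j < p)%N ->
  modinv p j = (p - j)%N <-> (j%:R ^+ 2 : 'F_p) = -1.
Proof.
move=> jp; have pjp : (p - j < p)%N by lia.
have sqrE : (j%:R * (p - j)%:R : 'F_p) = - j%:R ^+ 2.
  by rewrite Fp_natB ?mulrN -?expr2 //; lia.
split=> [/(modinv_eq jp pjp) | j2].
  by rewrite sqrE => /(congr1 -%R); rewrite opprK.
by apply/(modinv_eq jp pjp); rewrite sqrE j2 opprK.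
Qed.

Lemma card_sqrtm1_lower_le1 : (#|sqrtm1_lower p| <= 1)%N.
Proof.
apply/card_le1_eqP => x y; rewrite !inE => /andP[/andP[x_gt0 xp] /eqP x2].
case/andP=> /andP[_ yp] /eqP y2.
by apply/esym/ord_inj; apply: (Fp_sqr_lower_half_inj x_gt0 xp yp); rewrite x2 y2.
Qed.

Lemma prod_sqrtm1_lower_root i : (2 * i < p)%N -> ((i ^ 2).+1 %% p = 0)%N ->
  \prod_(j in sqrtm1_lower p) (j%:R : 'F_p) = i%:R.
Proof.
move=> ip i2p; have i_gt0 : (0 < i)%N.
  by rewrite lt0n; apply: contra_eqN i2p => /eqP->; rewrite modn_small ?prime_gt1.
have i2 : (i%:R ^+ 2 : 'F_p) = -1.
  have /Fp_nat_eq0 : (p %| (i ^ 2).+1)%N by apply/eqP.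
  by rewrite -[(i ^ 2).+1]addn1 natrD natrX => /eqP; rewrite addr_eq0 => /eqP.
have ilt : (i < p)%N by lia.
suff -> : sqrtm1_lower p = [set Ordinal ilt] by rewrite big_set1.
apply/setP => j; rewrite !inE; apply/andP/eqP => [[/andP[j_gt0 jp] /eqP j2] | ->].
  by apply: ord_inj; apply: (Fp_sqr_lower_half_inj j_gt0 jp ip); rewrite j2 i2.
by rewrite /= i_gt0 ip i2.
Qed.

End PrimeField.

Lemma big_lower_half_split (R : Type) (idx : R) (op : Monoid.com_law idx) p
    (F : 'I_p -> R) :
  \big[op/idx]_(j in lower_half p) F j =
    op (\big[op/idx]_(j in inv_lower p) F j) (\big[op/idx]_(j in inv_upper p) F j).
Proof.
by rewrite (bigID (fun j : 'I_p => (2 * modinv p j < p)%N)) /=; congr (op _ _);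
  apply: eq_bigl => j; rewrite !inE.
Qed.

Section OddPrime.
Variables p h : nat.
Hypotheses (p_pr : prime p) (p_eq : p = (2 * h).+1).

Lemma big_lower_half_set (R : Type) (idx : R) (op : Monoid.com_law idx) (G : nat -> R) :
  \big[op/idx]_(j in lower_half p) G j = \big[op/idx]_(1 <= j < h.+1) G j.
Proof. by subst p; rewrite -big_ord_lower_half; apply: eq_bigl => j; rewrite inE. Qed.

Lemma card_lower_half : #|lower_half p| = h.
Proof.
by rewrite -sum1_card (big_lower_half_set addn (fun=> 1%N)) sum_nat_const_nat muln1 subn1.
Qed.

(* Gauss's lemma: [2j] is congruent to [+-] an element of the lower half, and
   the map is a bijection of the lower half; the sign is [-] iff [2j > h]. *)
Lemma prod_lower_half_double :
  \prod_(j in lower_half p) ((2 * j)%:R : 'F_p) =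
    (-1) ^+ (h - h./2) * \prod_(j in lower_half p) (j%:R : 'F_p).
Proof.
pose fold n := if (n <= h)%N then n else (p - n)%N.
have foldE (j : 'I_p) : j \in lower_half p ->
    ((2 * j)%:R : 'F_p) = (-1) ^+ (h < 2 * j)%N * (fold (2 * j)%N)%:R.
  rewrite inE /fold => /andP[j_gt0 jp]; case: leqP => hj /=; first by rewrite mul1r.
  by rewrite (Fp_natB p_pr) ?mulN1r ?opprK //; lia.
rewrite (eq_bigr _ foldE) big_split /= prodrXr.
rewrite (big_lower_half_set addn (fun j => nat_of_bool (h < 2 * j)%N)) sum_gt_half.
congr (_ * _); pose g (j : 'I_p) : 'I_p := insubd j (fold (2 * j)%N).
have gE (j : 'I_p) : j \in lower_half p -> (g j : nat) = fold (2 * j)%N.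
  rewrite inE => /andP[j_gt0 jp]; rewrite val_insubd ifT // /fold.
  by case: (leqP (2 * j) h); lia.
have gA : {in lower_half p, forall j, g j \in lower_half p}.
  move=> j jH; rewrite inE gE //; move: jH; rewrite inE /fold => /andP[? ?].
  by case: (leqP (2 * j) h); lia.
have g_inj : {in lower_half p &, injective g}.
  move=> i j iH jH /(congr1 (@nat_of_ord p)); rewrite !gE // /fold => e.
  move: iH jH e; rewrite !inE => /andP[? ?] /andP[? ?] e; apply: ord_inj; move: e.
  by case: (leqP (2 * i) h); case: (leqP (2 * j) h); lia.
rewrite -[RHS](big_set_inj_endo _ (fun j : 'I_p => (j%:R : 'F_p)) gA g_inj).
by apply: eq_bigr => j jH; rewrite gE.
Qed.

Lemma inv_lower_pairing :
  exists k, mu p = k.*2.+1 /\ \prod_(j in inv_lower p) (j%:R : 'F_p) = 1.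
Proof.
pose s (j : 'I_p) : 'I_p := insubd j (modinv p j).
have jP (j : 'I_p) : j \in inv_lower p -> (0 < j < p)%N.
  by rewrite inE => /andP[/andP[-> _] _]; rewrite ltn_ord.
have sE (j : 'I_p) : j \in inv_lower p -> (s j : nat) = modinv p j.
  by move/jP => jp; rewrite val_insubd; case/andP: (modinv_gt0 p_pr jp) => _ ->.
have sA : {in inv_lower p, forall j, s j \in inv_lower p}.
  move=> j jA; have /andP[i_gt0 _] := modinv_gt0 p_pr (jP _ jA).
  rewrite inE sE // (modinvK p_pr) ?jP // i_gt0.
  by move: jA; rewrite inE => /andP[/andP[_ ->] ->].
have ssA : {in inv_lower p, forall j, s (s j) = j}.
  by move=> j jA; apply: ord_inj; rewrite !sE ?sA // (modinvK p_pr) ?jP.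
have sF : {in inv_lower p, forall j, s j != j -> (j%:R : 'F_p) * (s j)%:R = 1}.
  by move=> j jA _; rewrite sE //; case: (modinv_spec p_pr (jP _ jA)).
have [k [card_inv prod_inv]] := prod_involution sA ssA sF.
have p_gt1 : (1 < p)%N := prime_gt1 p_pr.
have modinv1 : modinv p 1 = 1%N by apply/(modinv_eq p_pr) => //; rewrite mulr1.
have fixE : [set j in inv_lower p | s j == j] = [set Ordinal p_gt1].
  apply/setP => j; rewrite in_set1 [in LHS]inE.
  apply/andP/eqP => [[jA /eqP/(congr1 (@nat_of_ord p))] | ->].
    rewrite sE // => /(modinv_eq p_pr (jP _ jA) (ltn_ord j)) j2.
    move: jA; rewrite inE => /andP[/andP[j_gt0 jp] _].
    by apply/ord_inj/(Fp_sqr_lower_half_inj p_pr) => //=; [lia | rewrite expr2 j2 expr1n].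
  have oneA : Ordinal p_gt1 \in inv_lower p by rewrite inE /= modinv1; lia.
  by split=> //; apply/eqP/ord_inj; rewrite sE //= modinv1.
exists k; rewrite prod_inv fixE big_set1 expr1n mulr1; split => //.
by rewrite [mu p]card_inv fixE cards1.
Qed.

Lemma inv_upper_pairing :
  exists k, #|inv_upper p| = (#|sqrtm1_lower p| + k.*2)%N /\
    \prod_(j in inv_upper p) (j%:R : 'F_p) =
      \prod_(j in sqrtm1_lower p) (j%:R : 'F_p) * (-1) ^+ k.
Proof.
pose s (j : 'I_p) : 'I_p := insubd j (p - modinv p j)%N.
have jP (j : 'I_p) : j \in inv_upper p -> (0 < j < p)%N.
  by rewrite inE => /andP[/andP[-> _] _]; rewrite ltn_ord.
have sE (j : 'I_p) : j \in inv_upper p -> (s j : nat) = (p - modinv p j)%N.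
  move/jP => jp; have := modinv_gt0 p_pr jp.
  by rewrite val_insubd => /andP[? ?]; rewrite ifT //; lia.
have modinv_sE (j : 'I_p) : j \in inv_upper p -> modinv p (p - modinv p j) = (p - j)%N.
  move=> jA; have jp := jP _ jA; have /andP[i_gt0 ip] := modinv_gt0 p_pr jp.
  apply/(modinv_eq p_pr); try lia.
  rewrite !(Fp_natB p_pr) ?mulrNN 1?mulrC; try lia.
  by case: (modinv_spec p_pr jp).
have sA : {in inv_upper p, forall j, s j \in inv_upper p}.
  move=> j jA; have /andP[i_gt0 ip] := modinv_gt0 p_pr (jP _ jA).
  rewrite inE sE // modinv_sE //.
  by move: jA; rewrite inE => /andP[/andP[? ?] ?]; lia.
have ssA : {in inv_upper p, forall j, s (s j) = j}.
  move=> j jA; apply: ord_inj; rewrite !sE ?sA // modinv_sE //.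
  by have := jP _ jA; lia.
have sF : {in inv_upper p, forall j, s j != j -> (j%:R : 'F_p) * (s j)%:R = -1}.
  move=> j jA _; have /andP[_ ip] := modinv_gt0 p_pr (jP _ jA).
  rewrite sE // (Fp_natB p_pr) ?mulrN; last lia.
  by case: (modinv_spec p_pr (jP _ jA)) => _ ->.
have [k [card_inv prod_inv]] := prod_involution sA ssA sF.
have fixE : [set j in inv_upper p | s j == j] = sqrtm1_lower p.
  apply/setP => j; rewrite [in LHS]inE [in RHS]inE.
  apply/andP/andP => [[jA /eqP/(congr1 (@nat_of_ord p))] | [jH /eqP j2]].
    have jp := jP _ jA; have /andP[_ ip] := modinv_gt0 p_pr jp.
    rewrite sE // => e; have /(modinv_eq_opp p_pr jp) j2 : modinv p j = (p - j)%N by lia.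
    by split; [move: jA; rewrite !inE => /andP[/andP[-> ->] _] | apply/eqP].
  have jp : (0 < j < p)%N by move: jH; rewrite inE => /andP[-> _]; rewrite ltn_ord.
  have ij := iffRL (modinv_eq_opp p_pr jp) j2.
  have jA : j \in inv_upper p by move: jH; rewrite !inE ij => /andP[? ?]; lia.
  by split=> //; apply/eqP/ord_inj; rewrite sE // ij; lia.
by exists k; rewrite -fixE.
Qed.

Lemma prod_sqrtm1_lower_odd : odd h -> \prod_(j in sqrtm1_lower p) (j%:R : 'F_p) = 1.
Proof.
move=> h_odd; rewrite (eq_bigl pred0) ?big_pred0_eq // => j; rewrite !inE.
apply/negbTE/negP => /andP[/andP[j_gt0 _] /eqP j2].
have /eqP := expf_card (j%:R : 'F_p); rewrite (card_Fp p_pr) [X in _ ^+ X]p_eq.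
have j_neq0 : (j%:R : 'F_p) != 0 by apply: (Fp_nat_neq0 p_pr); rewrite j_gt0 ltn_ord.
rewrite exprS -[X in _ == X]mulr1 (inj_eq (mulfI j_neq0)) exprM j2 -signr_odd.
rewrite h_odd expr1 eq_sym -addr_eq0 -mulr2n => /eqP /(Fp_nat_eq0 p_pr).
by move/dvdn_leq => /(_ isT); lia.
Qed.

Lemma dfact_Fp : ((dfact p.-1)%:R : 'F_p) =
  (-1) ^+ ((mu p).+1 %/ 2) * \prod_(j in sqrtm1_lower p) (j%:R : 'F_p).
Proof.
have [k1 [mu_eq prod_lower]] := inv_lower_pairing.
have [k2 [card_upper prod_upper]] := inv_upper_pairing.
have card_h : (mu p + #|inv_upper p|)%N = h.
  rewrite -card_lower_half -[#|lower_half p|]sum1_card.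
  by rewrite (big_lower_half_split addn) !sum1_card.
have sign_exp : (h - h./2 + k2 = (mu p).+1 %/ 2 %[mod 2])%N.
  by move: (mu p) (card_sqrtm1_lower_le1 p_pr) mu_eq card_h => m *; lia.
have -> : p.-1 = (2 * h)%N by rewrite p_eq.
rewrite dfact_double natr_prod -(big_lower_half_set _ (fun j => ((2 * j)%:R : 'F_p))).
rewrite prod_lower_half_double big_lower_half_split prod_lower prod_upper /= mul1r.
by rewrite mulrCA -exprD [RHS]mulrC (signr_mod2 _ sign_exp).
Qed.

End OddPrime.

Local Close Scope ring_scope.

Theorem theorem8 (p : nat) (hp : prime p) (hodd : odd p) :
  (p %% 4 = 3 ->
     ((dfact p.-1)%:Z = (-1) ^+ ((mu p).+1 %/ 2) %[mod p])%Z) /\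
  (p %% 4 = 1 ->
     forall i : nat, 2 * i < p -> (i ^ 2).+1 %% p = 0 ->
     ((dfact p.-1)%:Z = (-1) ^+ ((mu p).+1 %/ 2) * i%:Z %[mod p])%Z).
Proof.
have p_eq : p = (2 * p./2).+1 by rewrite -[LHS]odd_double_half hodd -mul2n.
have dfactE := dfact_Fp hp p_eq.
split=> [p3 | _ i ip i2p]; apply: (Fp_intr_eq_modz hp).
  have half_odd : odd p./2 by lia.
  by rewrite rmorphXn rmorphN1 -pmulrn dfactE (prod_sqrtm1_lower_odd hp p_eq) ?mulr1.
by rewrite rmorphM rmorphXn rmorphN1 -!pmulrn dfactE (prod_sqrtm1_lower_root hp ip i2p).
Qed.
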